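(* Let $\mathscr{H}$ be a complex Hilbert space and let $T$ be a Hilbert–Schmidt operator on $\mathscr{H}$. Then $$w_2^2(T)\leq\frac12\|T\|_2^2+\frac12|\mathrm{tr}(T^2)|.$$
   Context: An operator $T$ on $\mathscr{H}$ is Hilbert–Schmidt if $\sum_i\|Te_i\|^2<\infty$ for some (equivalently every) orthonormal basis $\{e_i\}$; its Hilbert–Schmidt norm is $\|T\|_2=(\mathrm{tr}(T^*T))^{1/2}$. $\Re(T)=\frac12(T+T^* )$ and $w_2(T)=\sup_{\theta\in\mathbb{R}}\|\Re(e^{i\theta}T)\|_2$. *)

From HB Require Import structures.
From mathcomp Require Import all_boot all_order all_algebra.
From mathcomp Require Import all_classical all_reals.
From mathcomp Require Import ereal esum trigo.
From mathcomp Require Import complex.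
Set Implicit Arguments. Unset Strict Implicit. Unset Printing Implicit Defensive.
Import Order.TTheory GRing.Theory Num.Theory.
Local Open Scope classical_set_scope.
Local Open Scope ring_scope.
Local Open Scope complex_scope.

Section Hilbert.
Variables (R : realType) (H : lmodType R[i]) (ip : H -> H -> R[i]).

Definition inner_product : Prop :=
  [/\ (forall (a : R[i]) x y z, ip (a *: x + y) z = a * ip x z + ip y z),
      (forall x y, ip x y = (ip y x)^*),
      (forall x, 0 <= ip x x) &
      (forall x, ip x x = 0 -> x = 0)].

Definition hnorm (x : H) : R := Num.sqrt (complex.Re (ip x x)).

Definition hilbert_complete : Prop :=
  forall u : nat -> H,
    (forall eps : R, 0 < eps -> exists N : nat, forall m n : nat,
        (N <= m)%N -> (N <= n)%N -> hnorm (u m - u n) < eps) ->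
    exists l : H, forall eps : R, 0 < eps -> exists N : nat, forall n : nat,
        (N <= n)%N -> hnorm (u n - l) < eps.

Definition bounded_op (A : H -> H) : Prop :=
  exists M : R, forall x, hnorm (A x) <= M * hnorm x.

Definition adjoint (A As : H -> H) : Prop :=
  forall x y, ip (A x) y = ip x (As y).

Definition onbasis (E : set H) : Prop :=
  [/\ (forall e, E e -> ip e e = 1),
      (forall e f, E e -> E f -> e <> f -> ip e f = 0) &
      (forall x, (forall e, E e -> ip x e = 0) -> x = 0)].

Definition hs_sum (E : set H) (A : H -> H) : \bar R :=
  \esum_(e in E) (((hnorm (A e)) ^+ 2)%:E).

Definition hilbert_schmidt (A : H -> H) : Prop :=
  exists E, onbasis E /\ (hs_sum E A < +oo)%E.

Definition hs_norm (E : set H) (A : H -> H) : R := Num.sqrt (fine (hs_sum E A)).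

(* unordered (net) convergence of sum_{e in E} f e to t *)
Definition usum_to (E : set H) (f : H -> R[i]) (t : R[i]) : Prop :=
  forall eps : R, 0 < eps -> exists F0 : set H,
    [/\ finite_set F0, F0 `<=` E &
      forall F : set H, finite_set F -> F0 `<=` F -> F `<=` E ->
        ComplexField.Normc.normc (\sum_(e \in F) f e - t) < eps].

Definition eith (th : R) : R[i] := cos th +i* sin th.

(* Re(e^{i theta} A) = (e^{i theta} A + e^{-i theta} A^* ) / 2 *)
Definition ReOp (A As : H -> H) (th : R) : H -> H :=
  fun x => (2%:R^-1 : R[i]) *: (eith th *: A x + eith (- th) *: As x).

Definition w2 (E : set H) (A As : H -> H) : R :=
  sup [set hs_norm E (ReOp A As th) | th in [set: R]].

End Hilbert.

From Pilot Require Import Defs.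
From HB Require Import structures.
From mathcomp Require Import all_boot all_order all_algebra.
From mathcomp Require Import all_classical all_reals.
From mathcomp Require Import ereal esum trigo.
From mathcomp Require Import complex.
From mathcomp Require Import finmap.
From mathcomp Require Import ring lra.
Import Order.TTheory GRing.Theory Num.Theory.
Local Open Scope classical_set_scope.
Local Open Scope ring_scope.
Local Open Scope complex_scope.
Import ComplexField.Normc.
Set Implicit Arguments. Unset Strict Implicit. Unset Printing Implicit Defensive.

(* On a basis vector e, expanding the square of
   Re(e^{i th} T) = (e^{i th} T + e^{-i th} T^* )/2 gives
     |Re(e^{i th} T) e|^2 = (|T e|^2 + |T^* e|^2)/4 + Re(e^{2 i th} <T^2 e, e>)/2.
   Summed over the basis, the first term is |T|_2^2/2 because |T^*|_2 = |T|_2,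
   and the second is at most |tr T^2|/2.
   Both |T^*|_2 = |T|_2 and the independence of |T|_2 from the basis come from
   Parseval's identity, applied on each side of the double sum of |<T e, f>|^2.
   Parseval is where completeness enters: the projections of x on an increasing
   chain of finite subsets of the basis exhausting its coefficient sum form a
   Cauchy sequence, whose limit has the coefficients of x and hence is x. *)

Section ComplexFacts.
Variable R : realType.
Implicit Types (z w : R[i]) (th : R).

Lemma normc_ge0 z : 0 <= normc z.
Proof. by case: z => a b; exact: sqrtr_ge0. Qed.

Lemma normc2E z : normc z ^+ 2 = complex.Re z ^+ 2 + complex.Im z ^+ 2.
Proof. by case: z => a b; rewrite /= sqr_sqrtr // addr_ge0 ?sqr_ge0. Qed.

Lemma mulcJ_normc2 z : z * conjc z = (normc z ^+ 2)%:C.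
Proof.
rewrite normc2E; case: z => a b /=.
by apply/eqP; rewrite eq_complex /=; apply/andP; split; apply/eqP; ring.
Qed.

Lemma normcJ z : normc (conjc z) = normc z.
Proof. by case: z => a b; rewrite /= sqrrN. Qed.

Lemma ReJ z : complex.Re (conjc z) = complex.Re z.
Proof. by case: z. Qed.

Lemma normc2_eq0 z : normc z ^+ 2 = 0 -> z = 0.
Proof. by move/eqP; rewrite sqrf_eq0 => /eqP /eq0_normc. Qed.

Lemma normc2D z w : normc (z + w) ^+ 2 <= 2 * normc z ^+ 2 + 2 * normc w ^+ 2.
Proof.
have := le_normcD z w; have := normc_ge0 (z + w).
move: (normc (z + w)) (normc z) (normc w) => c a b c0 cab.
have : c ^+ 2 <= (a + b) ^+ 2 by rewrite ler_pXn2r ?nnegrE // (le_trans c0).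
by have := sqr_ge0 (a - b); nra.
Qed.

Lemma Re_le_normc z : complex.Re z <= normc z.
Proof.
case: z => a b /=; apply: le_trans (ler_norm a) _; rewrite -sqrtr_sqr.
by apply: ler_wsqrtr; rewrite lerDl sqr_ge0.
Qed.

Lemma conj_eith th : conjc (eith th) = eith (- th).
Proof. by rewrite /eith cosN sinN. Qed.

Lemma normc_eith th : normc (eith th) = 1.
Proof. by rewrite /eith /= cos2Dsin2 sqrtr1. Qed.

End ComplexFacts.

Section FiniteSums.
Variables (R : realType) (T : choiceType).
Implicit Types (D : set T) (g : T -> R) (F G : {fset T}).

Lemma fsum_fset_set (A : set T) g : finite_set A ->
  (\sum_(x \in A) (g x)%:E)%E = (\sum_(x <- fset_set A) g x)%:E.
Proof. by move=> fA; rewrite fsumEFin // fsbig_finite. Qed.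

Lemma sum_fsubset_le F G g : (F `<=` G)%fset -> (forall x, 0 <= g x) ->
  \sum_(x <- F) g x <= \sum_(x <- G) g x.
Proof.
move=> /fsubsetP FG g0; rewrite [leRHS](big_fsetID _ (mem F)) /=.
have -> : [fset x in G | x \in F]%fset = F.
  by apply/fsetP => x; rewrite !inE /= andbC; case: (boolP (x \in F)) => // /FG ->.
by rewrite lerDl sumr_ge0.
Qed.

Lemma fsum_le_esum D g F : [set` F] `<=` D -> (forall x, 0 <= g x) ->
  ((\sum_(x <- F) g x)%:E <= \esum_(x in D) (g x)%:E)%E.
Proof.
move=> FD g0; apply: esum_ge; exists [set` F]; first by split => //; exact: finite_fset.
by rewrite fsum_fset_set ?set_fsetK //; exact: finite_fset.
Qed.

Lemma esum_le_fsum D g b :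
    (forall F, [set` F] `<=` D -> \sum_(x <- F) g x <= b) ->
  (\esum_(x in D) (g x)%:E <= b%:E)%E.
Proof.
move=> sum_le; apply: ge_ereal_sup => _ [A [fA AD] <-].
by rewrite fsum_fset_set // lee_fin sum_le // fset_setK.
Qed.

Lemma esum_fset_chain D g s : (forall x, 0 <= g x) ->
    \esum_(x in D) (g x)%:E = s%:E ->
  exists t : nat -> {fset T}, [/\ forall n, [set` t n] `<=` D,
    {homo t : n m / (n <= m)%N >-> (n `<=` m)%fset} &
    forall eps, 0 < eps -> exists N, s - eps < \sum_(x <- t N) g x].
Proof.
move=> g0 sumD.
have approx n : exists F, [set` F] `<=` D /\ s - n.+1%:R^-1 < \sum_(x <- F) g x.
  have pos : 0 < n.+1%:R^-1 :> R by rewrite invr_gt0 ltr0Sn.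
  have fin : \esum_(x in D) (g x)%:E \is a fin_num by rewrite sumD.
  have [_ [A [fA AD] <-]] := ub_ereal_sup_adherent pos fin.
  rewrite -/(esum D _) sumD -EFinB fsum_fset_set // lte_fin => lt_s.
  by exists (fset_set A); rewrite fset_setK.
have [B /all_and2[BD B_sum]] := choice approx.
exists (fun n => (\bigcup_(i <- index_iota 0 n.+1) B i)%fset); split.
- by move=> n x /bigfcupP[i _]; exact: BD.
- apply: homo_leq => [F|F G K|n]; [exact: fsubset_refl|exact: fsubset_trans|].
  by rewrite [X in (_ `<=` X)%fset]big_nat_recr //= fsubsetUl.
- move=> eps eps_gt0; exists (Num.truncn eps^-1).
  have lt_eps : s - eps < s - (Num.truncn eps^-1).+1%:R^-1.
    by rewrite ltrD2l ltrN2 invf_plt ?posrE ?ltr0Sn // truncnS_gt.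
  apply: lt_trans lt_eps (lt_le_trans (B_sum _) (sum_fsubset_le _ g0)).
  by apply: bigfcup_sup; rewrite ?mem_index_iota ?ltnSn.
Qed.

End FiniteSums.

Section InnerProduct.
Variables (R : realType) (H : lmodType R[i]) (ip : H -> H -> R[i]).
Hypothesis Hip : inner_product ip.
Local Notation hnorm := (hnorm ip).
Implicit Types (x y z u v : H) (a : R[i]).

Lemma ipC x y : ip x y = conjc (ip y x).
Proof. by case: Hip => _ + _ _; apply. Qed.

Lemma ipDl x y z : ip (x + y) z = ip x z + ip y z.
Proof. by case: Hip => /(_ 1 x y z); rewrite scale1r mul1r. Qed.

Lemma ip0l z : ip 0 z = 0.
Proof. by apply/(addrI (ip 0 z)); rewrite -ipDl !addr0. Qed.

Lemma ipZl a x z : ip (a *: x) z = a * ip x z.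
Proof. by case: Hip => /(_ a x 0 z); rewrite !addr0 ip0l addr0. Qed.

Lemma ipNl x z : ip (- x) z = - ip x z.
Proof. by rewrite -scaleN1r ipZl mulN1r. Qed.

Lemma ipBl x y z : ip (x - y) z = ip x z - ip y z.
Proof. by rewrite ipDl ipNl. Qed.

Lemma ipDr x y z : ip z (x + y) = ip z x + ip z y.
Proof. by rewrite ipC ipDl rmorphD /= -!ipC. Qed.

Lemma ipZr a x z : ip z (a *: x) = conjc a * ip z x.
Proof. by rewrite ipC ipZl rmorphM /= -ipC. Qed.

Lemma ipNr x z : ip z (- x) = - ip z x.
Proof. by rewrite ipC ipNl rmorphN /= -ipC. Qed.

Lemma ip_suml (I : Type) (s : seq I) (F : I -> H) z :
  ip (\sum_(i <- s) F i) z = \sum_(i <- s) ip (F i) z.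
Proof. by apply: (big_morph (ip^~ z)) => [u v|]; rewrite ?ipDl ?ip0l. Qed.

Lemma Re_ipC u v : complex.Re (ip u v) = complex.Re (ip v u).
Proof. by rewrite ipC ReJ. Qed.

Lemma ip_self x : ip x x = (hnorm x ^+ 2)%:C.
Proof.
have [_ _ /(_ x) xx_ge0 _] := Hip; have xx_real := ger0_Im xx_ge0.
rewrite sqr_sqrtr; first by move: xx_real; case: (ip x x) => ? ? /= ->.
by move: xx_ge0; rewrite {1}(complexE (ip x x)) xx_real mulr0 addr0 ler0c.
Qed.

Lemma hnorm2 x : hnorm x ^+ 2 = complex.Re (ip x x).
Proof. by rewrite ip_self. Qed.

Lemma hnorm_ge0 x : 0 <= hnorm x.
Proof. exact: sqrtr_ge0. Qed.

Lemma hnormN x : hnorm (- x) = hnorm x.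
Proof. by rewrite /Defs.hnorm ipNl ipNr opprK. Qed.

Lemma hnorm2D u v :
  hnorm (u + v) ^+ 2 = hnorm u ^+ 2 + hnorm v ^+ 2 + 2 * complex.Re (ip u v).
Proof.
rewrite !hnorm2 ipDl !ipDr !raddfD /= [complex.Re (ip v u)]Re_ipC.
by rewrite mulr2n; ring.
Qed.

Lemma hnorm2B u v :
  hnorm (u - v) ^+ 2 = hnorm u ^+ 2 + hnorm v ^+ 2 - 2 * complex.Re (ip u v).
Proof. by rewrite hnorm2D hnormN ipNr raddfN /= mulrN. Qed.

Lemma hnorm2Z a u : hnorm (a *: u) ^+ 2 = normc a ^+ 2 * hnorm u ^+ 2.
Proof. by rewrite !hnorm2 ipZl ipZr mulrA mulcJ_normc2 ip_self /= !mul0r !subr0. Qed.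

Section OrthonormalBasis.
Variable E : set H.
Hypothesis HE : onbasis ip E.
Implicit Types (F G : {fset H}) (e f : H).

Lemma ip_basis e f : E e -> E f -> ip e f = (e == f)%:R.
Proof.
case: HE => ip1 ip0 _ Ee Ef; case: eqP => [<-|/eqP ef]; first exact: ip1.
by apply: ip0 => // fe; rewrite fe eqxx in ef.
Qed.

Definition oproj F x : H := \sum_(e <- F) ip x e *: e.

Lemma ip_oproj_l F x z : ip (oproj F x) z = \sum_(e <- F) ip x e * ip e z.
Proof. by rewrite ip_suml; apply: eq_bigr => e _; rewrite ipZl. Qed.

Lemma ip_oproj_self F x :
  ip (oproj F x) x = (\sum_(e <- F) normc (ip x e) ^+ 2)%:C.
Proof.
by rewrite ip_oproj_l raddf_sum; apply: eq_bigr => e _; rewrite [ip e x]ipC mulcJ_normc2.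
Qed.

Lemma ip_oproj_basis F x f : [set` F] `<=` E -> E f ->
  ip (oproj F x) f = if f \in F then ip x f else 0.
Proof.
move=> FE Ef; rewrite ip_oproj_l.
have -> : \sum_(e <- F) ip x e * ip e f = \sum_(e <- F | e == f) ip x e.
  rewrite [RHS]big_mkcond; apply: eq_big_seq => e eF.
  rewrite (ip_basis (FE e eF) Ef).
  by case: (eqVneq e f) => [->|_]; rewrite ?mulr1 ?mulr0.
case: ifP => fF; last by rewrite big1_fset // => e eF /eqP ef; rewrite ef fF in eF.
exact: (fbig_pred1_inj (k := id) _ _ fF (@inj_id _)).
Qed.

Lemma ip_oproj_oproj F G x : [set` G] `<=` E -> (F `<=` G)%fset ->
  ip (oproj F x) (oproj G x) = (\sum_(e <- F) normc (ip x e) ^+ 2)%:C.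
Proof.
move=> GE /fsubsetP FG; rewrite ip_oproj_l raddf_sum; apply: eq_big_seq => e eF.
by rewrite [ip e _]ipC ip_oproj_basis ?FG // ?mulcJ_normc2 //; apply: GE; exact: FG.
Qed.

Lemma hnorm2_sub_oproj F x : [set` F] `<=` E ->
  hnorm (x - oproj F x) ^+ 2 = hnorm x ^+ 2 - \sum_(e <- F) normc (ip x e) ^+ 2.
Proof.
move=> FE; rewrite hnorm2B [hnorm (oproj F x) ^+ 2]hnorm2 ip_oproj_oproj ?fsubset_refl //.
by rewrite Re_ipC ip_oproj_self /=; ring.
Qed.

Lemma hnorm2_oproj_sub F G x : [set` G] `<=` E -> (F `<=` G)%fset ->
  hnorm (oproj G x - oproj F x) ^+ 2 =
  \sum_(e <- G) normc (ip x e) ^+ 2 - \sum_(e <- F) normc (ip x e) ^+ 2.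
Proof.
move=> GE FG; have FE : [set` F] `<=` E by move=> e /(fsubsetP FG) /GE.
rewrite hnorm2B !hnorm2 Re_ipC !ip_oproj_oproj ?fsubset_refl //=; ring.
Qed.

Lemma bessel F x : [set` F] `<=` E ->
  \sum_(e <- F) normc (ip x e) ^+ 2 <= hnorm x ^+ 2.
Proof. by move=> FE; rewrite -subr_ge0 -hnorm2_sub_oproj // sqr_ge0. Qed.

Lemma normc_ip_basis_le x e : E e -> normc (ip x e) ^+ 2 <= hnorm x ^+ 2.
Proof.
move=> Ee; have := @bessel [fset e]%fset x; rewrite big_seq_fset1; apply.
by move=> f /=; rewrite inE => /eqP ->.
Qed.

Section Parseval.
Variables (x : H) (s : R).
Hypothesis esum_coef : \esum_(e in E) (normc (ip x e) ^+ 2)%:E = s%:E.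
Local Notation coef_sum F := (\sum_(e <- F) normc (ip x e) ^+ 2).

Lemma coef_sum_le F : [set` F] `<=` E -> coef_sum F <= s.
Proof. by move=> FE; rewrite -lee_fin -esum_coef fsum_le_esum // => e; exact: sqr_ge0. Qed.

Lemma normc_ip_residual_le F e : [set` F] `<=` E -> E e ->
  normc (ip (x - oproj F x) e) ^+ 2 <= s - coef_sum F.
Proof.
move=> FE Ee; rewrite ipBl ip_oproj_basis //; case: ifP => eF.
  by rewrite subrr normc0 expr0n /= subr_ge0 coef_sum_le.
rewrite subr0 lerBrDr -(big_fsetU1 _ (fun f => normc (ip x f) ^+ 2) (negbT eF)).
by apply: coef_sum_le => f /= /fset1UP[->|/FE].
Qed.

Variable t : nat -> {fset H}.
Hypotheses (tE : forall n, [set` t n] `<=` E)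
  (t_homo : {homo t : n m / (n <= m)%N >-> (n `<=` m)%fset})
  (t_exhaust : forall eps, 0 < eps -> exists N, s - eps < coef_sum (t N)).

Lemma coef_sum_tail eps : 0 < eps ->
  exists N, forall n, (N <= n)%N -> s - coef_sum (t n) < eps.
Proof.
move=> eps_gt0; have [N ltN] := t_exhaust eps_gt0; exists N => n Nn.
have : coef_sum (t N) <= coef_sum (t n) by apply: sum_fsubset_le (t_homo Nn) _ => e; exact: sqr_ge0.
by move: ltN; lra.
Qed.

Lemma oproj_cauchy eps : 0 < eps -> exists N, forall m n, (N <= m)%N -> (N <= n)%N ->
  hnorm (oproj (t m) x - oproj (t n) x) < eps.
Proof.
move=> eps_gt0; have [N tail] := coef_sum_tail (exprn_gt0 2 eps_gt0).
exists N => m n Nm Nn; wlog nm : m n Nm Nn / (n <= m)%N.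
  move=> W; case: (leqP n m) => [|/ltnW] nm; first exact: W.
  by rewrite -hnormN opprB; exact: W.
rewrite -(ltr_pXn2r (n := 2)) ?nnegrE ?hnorm_ge0 ?ltW // hnorm2_oproj_sub ?t_homo //.
by have := tail n Nn; have := coef_sum_le (@tE m); lra.
Qed.

Variable l : H.
Hypothesis oproj_to_l : forall eps, 0 < eps ->
  exists N, forall n, (N <= n)%N -> hnorm (oproj (t n) x - l) < eps.

Lemma oproj_tail d : 0 < d ->
  exists n, s - coef_sum (t n) < d /\ hnorm (oproj (t n) x - l) ^+ 2 < d.
Proof.
move=> d_gt0; have [N1 tail1] := coef_sum_tail d_gt0.
have sqrt_gt0 : 0 < Num.sqrt d by rewrite sqrtr_gt0.
have [N2 tail2] := oproj_to_l sqrt_gt0.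
exists (maxn N1 N2); split; first exact/tail1/leq_maxl.
rewrite -[ltRHS](sqr_sqrtr (ltW d_gt0)) ltr_pXn2r ?nnegrE ?hnorm_ge0 ?sqrtr_ge0 //.
exact/tail2/leq_maxr.
Qed.

Lemma oproj_lim_eq : x = l.
Proof.
apply/eqP; rewrite -subr_eq0; apply/eqP; case: HE => _ _; apply => e Ee.
apply: normc2_eq0; apply/eqP; rewrite eq_le sqr_ge0 andbT.
apply/ler_addgt0Pr => d d_gt0; rewrite add0r.
have [n [tail_n near_n]] : exists n, s - coef_sum (t n) < d / 4 /\
    hnorm (oproj (t n) x - l) ^+ 2 < d / 4 by apply: oproj_tail; lra.
have -> : x - l = (x - oproj (t n) x) + (oproj (t n) x - l) by rewrite addrA subrK.
rewrite ipDl; apply: le_trans (normc2D _ _) _.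
have := normc_ip_residual_le (@tE n) Ee; have := normc_ip_basis_le (oproj (t n) x - l) Ee.
by lra.
Qed.

Lemma hnorm2_le_esum : hnorm x ^+ 2 <= s.
Proof.
apply/ler_addgt0Pr => d d_gt0; have [n [_ near_n]] := oproj_tail d_gt0.
have := hnorm2_sub_oproj x (@tE n); rewrite {1}oproj_lim_eq -hnormN opprB.
by have := coef_sum_le (@tE n); lra.
Qed.

End Parseval.

Lemma parseval (Hcomp : hilbert_complete ip) x :
  (hnorm x ^+ 2)%:E = \esum_(e in E) (normc (ip x e) ^+ 2)%:E.
Proof.
set S := esum _ _.
have S_le : (S <= (hnorm x ^+ 2)%:E)%E by apply: esum_le_fsum => F; exact: bessel.
have S_ge0 : (0 <= S)%E by apply: esum_ge0 => e _; rewrite lee_fin sqr_ge0.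
have S_E : S = (fine S)%:E by rewrite fineK // ge0_fin_numE // (le_lt_trans S_le) ?ltry.
have [t [tE t_homo t_exhaust]] := esum_fset_chain (fun e => sqr_ge0 _) S_E.
have [l oproj_to_l] := Hcomp _ (oproj_cauchy S_E tE t_homo t_exhaust).
apply/eqP; rewrite eq_le S_le [S]S_E lee_fin andbT.
exact: (hnorm2_le_esum S_E tE t_homo t_exhaust oproj_to_l).
Qed.

End OrthonormalBasis.

Section HilbertSchmidt.
Hypothesis Hcomp : hilbert_complete ip.
Implicit Types (A As : H -> H) (E F : set H).

Lemma hs_sum_ge0 E A : (0 <= hs_sum ip E A)%E.
Proof. by apply: esum_ge0 => e _; rewrite lee_fin sqr_ge0. Qed.

Lemma hs_sumE E A : (hs_sum ip E A < +oo)%E -> hs_sum ip E A = (hs_norm ip E A ^+ 2)%:E.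
Proof.
move=> fin; have fin_ge0 : 0 <= fine (hs_sum ip E A) by rewrite fine_ge0 // hs_sum_ge0.
by rewrite sqr_sqrtr // fineK // ge0_fin_numE // hs_sum_ge0.
Qed.

Lemma hs_sum_double A E F : onbasis ip F ->
  hs_sum ip E A = \esum_(k in E `*`` (fun=> F)) (normc (ip (A k.1) k.2) ^+ 2)%:E.
Proof.
move=> HF; transitivity (\esum_(e in E) \esum_(f in F) (normc (ip (A e) f) ^+ 2)%:E).
  by apply: eq_esum => e _; rewrite (parseval HF Hcomp).
by apply: esum_esum => *; rewrite lee_fin sqr_ge0.
Qed.

Lemma hs_sum_adjoint A As E F : adjoint ip A As -> onbasis ip E -> onbasis ip F ->
  hs_sum ip E A = hs_sum ip F As.
Proof.
move=> adj HE HF; rewrite (hs_sum_double _ _ HF) (hs_sum_double _ _ HE).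
have -> : E `*`` (fun=> F) = (fun k : H * H => (k.2, k.1)) @` (F `*`` (fun=> E)).
  apply/seteqP; split => [[a b] /= [Ea Fb]|_ [[a b] /= [Fa Eb] <-]] //.
  by exists (b, a).
rewrite esum_image; last by move=> [a b] [c d] _ _ /= [-> ->].
by apply: eq_esum => -[a b] _ /=; rewrite adj ipC normcJ.
Qed.

Lemma hs_sum_basis_invariant A As E F : adjoint ip A As -> onbasis ip E -> onbasis ip F ->
  hs_sum ip E A = hs_sum ip F A.
Proof. by move=> adj HE HF; rewrite (hs_sum_adjoint adj HE HF) (hs_sum_adjoint adj HF HF). Qed.

End HilbertSchmidt.

Lemma normc_half : normc (2%:R^-1 : R[i]) ^+ 2 = 4%:R^-1.
Proof.
rewrite normcV -[2%:R]/((1 : R[i]) *+ 2).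
by rewrite normcMn normc1 exprVn; field.
Qed.

Lemma hnorm2_ReOp A As th x : adjoint ip A As ->
  hnorm (ReOp A As th x) ^+ 2 = (hnorm (A x) ^+ 2 + hnorm (As x) ^+ 2) / 4%:R
    + complex.Re (eith th ^+ 2 * ip (A (A x)) x) / 2%:R.
Proof.
move=> adj; rewrite /ReOp hnorm2Z normc_half hnorm2D !hnorm2Z ipZl ipZr.
by rewrite conj_eith opprK !normc_eith -adj [eith th ^+ 2]expr2 mulrA; field.
Qed.

Lemma sum_hnorm2_ReOp A As th (K : {fset H}) : adjoint ip A As ->
  \sum_(e <- K) hnorm (ReOp A As th e) ^+ 2 =
    (\sum_(e <- K) hnorm (A e) ^+ 2 + \sum_(e <- K) hnorm (As e) ^+ 2) / 4%:R
    + complex.Re (eith th ^+ 2 * \sum_(e <- K) ip (A (A e)) e) / 2%:R.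
Proof.
move=> adj; under eq_bigr do rewrite hnorm2_ReOp //.
by rewrite big_split -!mulr_suml big_split mulr_sumr raddf_sum.
Qed.

Lemma hs_sum_ReOp_le A As E (a : R) (t : R[i]) th : adjoint ip A As ->
    hs_sum ip E A = a%:E -> hs_sum ip E As = a%:E ->
    usum_to E (fun e => ip (A (A e)) e) t ->
  (hs_sum ip E (ReOp A As th) <= (2%:R^-1 * a + 2%:R^-1 * normc t)%:E)%E.
Proof.
move=> adj hsA hsAs trace_t; apply: esum_le_fsum => G GE.
apply/ler_addgt0Pr => d d_gt0; have [F0 [fin_F0 F0E near_t]] := trace_t d d_gt0.
set K := (G `|` fset_set F0)%fset.
have KE : [set` K] `<=` E.
  by move=> e /=; rewrite in_fsetU in_fset_set // => /orP[/GE|/set_mem /F0E].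
have near_K : normc (\sum_(e <- K) ip (A (A e)) e - t) < d.
  have := near_t [set` K] (finite_fset K); rewrite fsbig_finite ?finite_fset // set_fsetK.
  by apply=> // e F0e /=; rewrite in_fsetU in_fset_set // mem_set ?orbT.
have sum_le B : hs_sum ip E B = a%:E -> \sum_(e <- K) hnorm (B e) ^+ 2 <= a.
  by move=> hsB; rewrite -lee_fin -hsB fsum_le_esum // => e; exact: sqr_ge0.
have trace_le : complex.Re (eith th ^+ 2 * \sum_(e <- K) ip (A (A e)) e) <= normc t + d.
  apply: le_trans (Re_le_normc _) _; rewrite normcM expr2 normcM normc_eith !mul1r.
  by have := le_normcD (\sum_(e <- K) ip (A (A e)) e - t) t; rewrite subrK; lra.
apply: le_trans (sum_fsubset_le (fsubsetUl G (fset_set F0)) (fun e => sqr_ge0 _)) _.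
by rewrite sum_hnorm2_ReOp //; have := sum_le _ hsA; have := sum_le _ hsAs; lra.
Qed.

Lemma hs_norm_le E A (b : R) : (hs_sum ip E A <= b%:E)%E -> hs_norm ip E A <= Num.sqrt b.
Proof.
move=> le_b; apply: ler_wsqrtr; move: le_b (hs_sum_ge0 E A).
by case: (hs_sum ip E A).
Qed.

Lemma w2_sqr_le E A As (b : R) :
  (forall th, (hs_sum ip E (ReOp A As th) <= b%:E)%E) -> w2 ip E A As ^+ 2 <= b.
Proof.
move=> le_b; have b_ge0 : 0 <= b by rewrite -lee_fin (le_trans (hs_sum_ge0 _ _) (le_b 0)).
set S := [set hs_norm ip E (ReOp A As th) | th in [set: R]].
have S_ub : ubound S (Num.sqrt b) by move=> _ [th _ <-]; exact: hs_norm_le.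
have w2_le : w2 ip E A As <= Num.sqrt b.
  by apply: ge_sup => //; exists (hs_norm ip E (ReOp A As 0)), 0.
have w2_ge0 : 0 <= w2 ip E A As.
  apply: le_trans (sqrtr_ge0 (fine (hs_sum ip E (ReOp A As 0)))) _.
  by apply: ub_le_sup; [exists (Num.sqrt b)|exists 0].
by rewrite -(sqr_sqrtr b_ge0) ler_pXn2r ?nnegrE ?sqrtr_ge0.
Qed.

End InnerProduct.

Theorem corollary3p5 (R : realType) (H : lmodType R[i]) (ip : H -> H -> R[i])
  (Hip : inner_product ip) (Hcomp : hilbert_complete ip)
  (T : {linear H -> H}) (Ts : H -> H)
  (Tbd : bounded_op ip T) (Tadj : adjoint ip T Ts)
  (THS : hilbert_schmidt ip T)
  (E : set H) (HE : onbasis ip E)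
  (t : R[i]) (Ht : usum_to E (fun e => ip (T (T e)) e) t) :
  (w2 ip E T Ts) ^+ 2 <=
    2%:R^-1 * (hs_norm ip E T) ^+ 2 + 2%:R^-1 * ComplexField.Normc.normc t.
Proof.
have [E' [HE' fin']] := THS.
have hsT : hs_sum ip E T = (hs_norm ip E T ^+ 2)%:E.
  by apply: hs_sumE; rewrite (hs_sum_basis_invariant Hip Hcomp Tadj HE HE').
have hsTs : hs_sum ip E Ts = (hs_norm ip E T ^+ 2)%:E.
  by rewrite -(hs_sum_adjoint Hip Hcomp Tadj HE HE).
by apply: w2_sqr_le => th; exact: hs_sum_ReOp_le.
Qed.
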